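(* Let $N,d\in\mathbb N$, let $D$ be a set and $C\subseteq D$, and let $b_0,b_1,\ldots,b_N:D\to\mathbb R$ be functions such that $b_k(\mathbf t)\ge 0$ for all $k$ and $\sum_{k=0}^N b_k(\mathbf t)=1$ for every $\mathbf t\in C$. Let $\omega_0,\ldots,\omega_N>0$ be weights and $\mathbf W_0,\ldots,\mathbf W_N\in\mathbb R^d$ control points, and define $$\mathbf S_N(\mathbf t):=\frac{\sum_{k=0}^N\omega_k\mathbf W_k b_k(\mathbf t)}{\sum_{k=0}^N\omega_k b_k(\mathbf t)}\qquad(\mathbf t\in C).$$ Fix $\mathbf t\in C$ with $b_k(\mathbf t)>0$ for $1\le k\le N$. Define $h_0:=1$, $\mathbf Q_0:=\mathbf W_0$ and, for $k=1,\ldots,N$, $$h_k:=\left(1+\frac{\omega_{k-1}b_{k-1}(\mathbf t)}{h_{k-1}\,\omega_k b_k(\mathbf t)}\right)^{-1},\qquad \mathbf Q_k:=(1-h_k)\mathbf Q_{k-1}+h_k\mathbf W_k .$$ Then these quantities are well defined and, for every $k=0,1,\ldots,N$: $h_k\in[0,1]$, $\mathbf Q_k\in\mathbb R^d$, and $\mathbf Q_k\in\operatorname{conv}\{\mathbf W_0,\mathbf W_1,\ldots,\mathbf W_k\}$ (so $\operatorname{conv}\{\mathbf Q_0,\ldots,\mathbf Q_k\}\subseteq\operatorname{conv}\{\mathbf W_0,\ldots,\mathbf W_k\}$). Moreover, $\mathbf S_N(\mathbf t)=\mathbf Q_N$.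
   Context: $\operatorname{conv}$ denotes the convex hull. The Euclidean space $\mathbb E^d$ of the paper is identified with $\mathbb R^d$. *)

From mathcomp Require Import all_boot all_order all_algebra.
From mathcomp Require Import reals.
Set Implicit Arguments. Unset Strict Implicit. Unset Printing Implicit Defensive.
Import Order.TTheory GRing.Theory Num.Theory.
Local Open Scope ring_scope.

Definition conv (R : realType) (d : nat) (A : 'rV[R]_d -> Prop) : 'rV[R]_d -> Prop :=
  fun p => exists (n : nat) (l : 'I_n -> R) (x : 'I_n -> 'rV[R]_d),
    (forall i, A (x i)) /\ (forall i, 0 <= l i) /\ \sum_(i < n) l i = 1 /\
    p = \sum_(i < n) l i *: x i.

Definition pts (R : realType) (d : nat) (P : nat -> 'rV[R]_d) (k : nat) : 'rV[R]_d -> Prop :=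
  fun p => exists2 i, (i <= k)%N & p = P i.

(* h_0 := 1, h_k := (1 + om_{k-1} bt_{k-1} / (h_{k-1} om_k bt_k))^-1,
   where bt k stands for b_k(t). *)
Fixpoint hseq (R : realType) (om bt : nat -> R) (k : nat) : R :=
  match k with
  | 0 => 1
  | k'.+1 => (1 + om k' * bt k' / (hseq om bt k' * (om k'.+1 * bt k'.+1)))^-1
  end.

Fixpoint Qseq (R : realType) (d : nat) (om bt : nat -> R) (W : nat -> 'rV[R]_d) (k : nat)
  : 'rV[R]_d :=
  match k with
  | 0 => W 0%N
  | k'.+1 => (1 - hseq om bt k'.+1) *: Qseq om bt W k' + hseq om bt k'.+1 *: W k'.+1
  end.

Definition S_N (R : realType) (d : nat) (D : Type) (N : nat) (om : nat -> R)
  (W : nat -> 'rV[R]_d) (b : nat -> D -> R) (t : D) : 'rV[R]_d :=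
  (\sum_(k < N.+1) om k * b k t)^-1 *: \sum_(k < N.+1) (om k * b k t) *: W k.

From mathcomp Require Import all_boot all_order all_algebra.
From mathcomp Require Import reals.
From mathcomp Require Import ring lra.
Set Implicit Arguments. Unset Strict Implicit. Unset Printing Implicit Defensive.
Import Order.TTheory GRing.Theory Num.Theory.
Local Open Scope ring_scope.

(* With c_k := om_k b_k(t) and s_k := c_0 + ... + c_k, the recursion for h
   unwinds to h_k s_k = c_k, so that s_k Q_k = c_0 W_0 + ... + c_k W_k by
   induction, and Q_N = S_N(t).  Since 0 <= h_k <= 1, each Q_k is a convex
   combination of Q_{k-1} and W_k, hence lies in conv {W_0, ..., W_k}; a convex
   combination of the Q_i is then again one of the W_j, by composing the
   coefficient vectors. *)

Lemma hseqS (R : realType) (om bt : nat -> R) k :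
  hseq om bt k.+1 = (1 + om k * bt k / (hseq om bt k * (om k.+1 * bt k.+1)))^-1.
Proof. by []. Qed.

Lemma QseqS (R : realType) d (om bt : nat -> R) (W : nat -> 'rV[R]_d) k :
  Qseq om bt W k.+1 = (1 - hseq om bt k.+1) *: Qseq om bt W k + hseq om bt k.+1 *: W k.+1.
Proof. by []. Qed.

Lemma weighted_sum_neq0 (R : numDomainType) n (w a : 'I_n -> R) :
  (forall i, 0 < w i) -> (forall i, 0 <= a i) ->
  \sum_i a i != 0 -> \sum_i w i * a i != 0.
Proof.
move=> w_gt0 a_ge0; apply: contra => /eqP sum_wa0; apply/eqP/big1 => i _.
have /(_ i isT)/eqP := psumr_eq0P (fun i _ => mulr_ge0 (ltW (w_gt0 i)) (a_ge0 i)) sum_wa0.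
by rewrite mulf_eq0 gt_eqF //= => /eqP.
Qed.

Section ConvexHull.
Variables (R : realType) (d : nat).
Implicit Types (A B : 'rV[R]_d -> Prop) (P Q : nat -> 'rV[R]_d).

Lemma conv_mem A x : A x -> conv A x.
Proof.
move=> Ax; exists 1%N, (fun _ => 1), (fun _ => x).
by rewrite !big_ord1 scale1r.
Qed.

Lemma sub_conv {A B} : (forall x, A x -> B x) -> forall x, conv A x -> conv B x.
Proof.
move=> sAB x [n [l [y [Ay [l_ge0 [l_sum ->]]]]]].
by exists n, l, y; split=> // i; apply: sAB.
Qed.

Lemma pts_mem P i k : (i <= k)%N -> pts P k (P i).
Proof. by exists i. Qed.

Lemma sub_pts {P k m} : (k <= m)%N -> forall x, pts P k x -> pts P m x.
Proof. by move=> km x [i ik ->]; exists i; first exact: leq_trans km. Qed.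

Lemma conv_ptsP P k p :
  conv (pts P k) p <->
  exists l : 'I_k.+1 -> R,
    [/\ forall j, 0 <= l j, \sum_j l j = 1 & p = \sum_j l j *: P j].
Proof.
split=> [[n [l [x [Px [l_ge0 [l_sum ->]]]]]] | [l [l_ge0 l_sum ->]]]; last first.
  by exists k.+1, l, (fun j => P j); split=> // j; apply: pts_mem; rewrite -ltnS.
have /fin_all_exists [f xE] : forall i, exists j : 'I_k.+1, x i = P j.
  by move=> i; have [j jk ->] := Px i; exists (Ordinal (jk : (j < k.+1)%N)).
exists (fun j => \sum_(i | f i == j) l i); split.
- by move=> j; apply: sumr_ge0 => i _.
- by rewrite -l_sum (partition_big f predT).
rewrite (partition_big f predT) //=; apply: eq_bigr => j _.
by rewrite scaler_suml; apply: eq_bigr => i /eqP fij; rewrite xE fij.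
Qed.

Lemma conv_pts_convex P k x y a : 0 <= a <= 1 ->
  conv (pts P k) x -> conv (pts P k) y -> conv (pts P k) ((1 - a) *: x + a *: y).
Proof.
move=> /andP[a_ge0 a_le1] /conv_ptsP[l [l_ge0 l_sum ->]] /conv_ptsP[m [m_ge0 m_sum ->]].
apply/conv_ptsP; exists (fun j => (1 - a) * l j + a * m j); split.
- by move=> j; rewrite addr_ge0 // mulr_ge0 // subr_ge0.
- by rewrite big_split /= -!mulr_sumr l_sum m_sum !mulr1 subrK.
under [RHS]eq_bigr do rewrite scalerDl -!scalerA.
by rewrite big_split /= -!scaler_sumr.
Qed.

Lemma conv_pts_trans P Q k m :
  (forall i, (i <= k)%N -> conv (pts P m) (Q i)) ->
  forall p, conv (pts Q k) p -> conv (pts P m) p.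
Proof.
move=> QP p /conv_ptsP[l [l_ge0 l_sum ->]].
have /fin_all_exists[mu mu_coef] : forall i : 'I_k.+1, exists mu : 'I_m.+1 -> R,
    [/\ forall j, 0 <= mu j, \sum_j mu j = 1 & Q i = \sum_j mu j *: P j].
  by move=> i; apply/conv_ptsP/QP; rewrite -ltnS.
apply/conv_ptsP; exists (fun j => \sum_i l i * mu i j); split.
- move=> j; apply: sumr_ge0 => i _; rewrite mulr_ge0 //.
  by have [] := mu_coef i.
- rewrite exchange_big /= -l_sum; apply: eq_bigr => i _.
  by rewrite -mulr_sumr; have [_ -> _] := mu_coef i; rewrite mulr1.
under [RHS]eq_bigr do rewrite scaler_suml.
rewrite [RHS]exchange_big /=; apply: eq_bigr => i _.
by have [_ _ ->] := mu_coef i; rewrite scaler_sumr; apply: eq_bigr => j _; rewrite scalerA.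
Qed.

Lemma Qseq_conv (om bt : nat -> R) P k :
  (forall i, (i <= k)%N -> 0 <= hseq om bt i <= 1) ->
  conv (pts P k) (Qseq om bt P k).
Proof.
elim: k => [|k IH] h_bnd; first exact/conv_mem/pts_mem.
rewrite QseqS; apply: conv_pts_convex; first exact: h_bnd.
- apply: sub_conv (sub_pts (leqnSn k)) _ _.
  by apply: IH => i ik; apply/h_bnd/ltnW.
- exact/conv_mem/pts_mem.
Qed.

End ConvexHull.

Section Recurrence.
Variables (R : realType) (N : nat) (om bt : nat -> R).
Hypothesis c_ge0 : forall k, (k <= N)%N -> 0 <= om k * bt k.
Hypothesis c_gt0 : forall k, (1 <= k <= N)%N -> 0 < om k * bt k.
Local Notation h := (hseq om bt).
Local Notation s k := (\sum_(j < k.+1) om j * bt j).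

Lemma hseq_ratio_ge0 {k} : (k < N)%N -> 0 < h k ->
  0 <= om k * bt k / (h k * (om k.+1 * bt k.+1)).
Proof.
move=> kN hk; rewrite divr_ge0 ?c_ge0 ?(ltnW kN) //.
by rewrite mulr_ge0 ?ltW // c_gt0.
Qed.

Lemma hseq_gt0 {k} : (k <= N)%N -> 0 < h k.
Proof.
elim: k => [|k IH] kN; first exact: ltr01.
have := hseq_ratio_ge0 kN (IH (ltnW kN)); rewrite hseqS invr_gt0; lra.
Qed.

Lemma hseq_le1 {k} : (k <= N)%N -> h k <= 1.
Proof.
case: k => [|k] kN; first exact: lexx.
have ratio_ge0 := hseq_ratio_ge0 kN (hseq_gt0 (ltnW kN)).
by rewrite hseqS invf_le1; lra.
Qed.

Lemma hseq_mul_psum {k} : (k <= N)%N -> h k * s k = om k * bt k.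
Proof.
elim: k => [|k IH] kN; first by rewrite big_ord1 mul1r.
have hk := hseq_gt0 (ltnW kN).
have sk : 0 <= s k.
  by apply: sumr_ge0 => j _; apply/c_ge0/(leq_trans (ltnW (ltn_ord j)) kN).
rewrite hseqS -(IH (ltnW kN)) [s k.+1]big_ord_recr /=.
set c := om k.+1 * bt k.+1; have c_pos : 0 < c by rewrite c_gt0.
have -> : 1 + h k * s k / (h k * c) = (s k + c) / c by field; rewrite !gt_eqF.
have sc : 0 < s k + c by lra.
by rewrite invf_div divfK // gt_eqF.
Qed.

Lemma psum_scale_Qseq d (W : nat -> 'rV[R]_d) {k} : (k <= N)%N ->
  s k *: Qseq om bt W k = \sum_(j < k.+1) (om j * bt j) *: W j.
Proof.
elim: k => [|k IH] kN; first by rewrite !big_ord1.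
rewrite QseqS scalerDr !scalerA mulrBr mulr1 [s k.+1 * _]mulrC hseq_mul_psum //.
by rewrite [s k.+1]big_ord_recr /= addrK [RHS]big_ord_recr /= IH // ltnW.
Qed.

End Recurrence.

Theorem theorem1 (R : realType) (N d : nat) (D : Type) (C : D -> Prop)
  (b : nat -> D -> R) (om : nat -> R) (W : nat -> 'rV[R]_d) (t : D) :
  (forall s, C s -> (forall k, (k <= N)%N -> 0 <= b k s) /\
                    \sum_(k < N.+1) b k s = 1) ->
  (forall k, (k <= N)%N -> 0 < om k) ->
  C t ->
  (forall k, (1 <= k <= N)%N -> 0 < b k t) ->
  let bt := fun k => b k t in
  let h := hseq om bt in
  let Q := Qseq om bt W in
  (* well-definedness: all denominators/inverted quantities are nonzero *)
  (\sum_(k < N.+1) om k * b k t != 0) /\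
  (forall k, (1 <= k <= N)%N ->
     h k.-1 * (om k * bt k) != 0 /\
     1 + om k.-1 * bt k.-1 / (h k.-1 * (om k * bt k)) != 0) /\
  (forall k, (k <= N)%N ->
     0 <= h k <= 1 /\
     conv (pts W k) (Q k) /\
     (forall p, conv (pts Q k) p -> conv (pts W k) p)) /\
  S_N N om W b t = Q N.
Proof.
move=> b_prop om_gt0 Ct bt_gt0 bt h Q.
have [bt_ge0 bt_sum] := b_prop t Ct.
have c_ge0 k : (k <= N)%N -> 0 <= om k * bt k.
  move=> kN; exact: mulr_ge0 (ltW (om_gt0 k kN)) (bt_ge0 k kN).
have c_gt0 k : (1 <= k <= N)%N -> 0 < om k * bt k.
  move=> /[dup] /andP[_ kN] k_bnd; exact: mulr_gt0 (om_gt0 k kN) (bt_gt0 k k_bnd).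
have h_bnd k : (k <= N)%N -> 0 <= h k <= 1.
  by move=> kN; rewrite (ltW (hseq_gt0 c_ge0 c_gt0 kN)) (hseq_le1 c_ge0 c_gt0 kN).
have sN : \sum_(k < N.+1) om k * b k t != 0.
  apply: weighted_sum_neq0 => [k|k|]; last by rewrite bt_sum oner_neq0.
  - by rewrite om_gt0 // -ltnS.
  - by rewrite bt_ge0 // -ltnS.
split=> //; split; [|split].
- case=> // k /= kN; rewrite /h; have hk := hseq_gt0 c_ge0 c_gt0 (ltnW kN).
  have ratio_ge0 := hseq_ratio_ge0 c_ge0 c_gt0 kN hk.
  split; first by rewrite mulf_neq0 // gt_eqF // c_gt0.
  by rewrite gt_eqF //; lra.
- move=> k kN; split; first exact: h_bnd.
  have Q_conv i : (i <= N)%N -> conv (pts W i) (Q i).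
    by move=> iN; apply: Qseq_conv => j ji; apply/h_bnd/(leq_trans ji).
  split; first exact: Q_conv.
  apply: conv_pts_trans => i ik; apply: sub_conv (sub_pts ik) _ _.
  exact/Q_conv/(leq_trans ik).
by rewrite /S_N -(psum_scale_Qseq c_ge0 c_gt0) // scalerA mulVf // scale1r.
Qed.
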